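(* For $x\in(0,1)$, let $\lambda\in\mathbb{R}$ be the solution of $x=e^{-e^{\lambda}}(e^{\lambda}+1)$. Then $$\lambda-\log(-\log x)\le\log\tfrac23+\log\Big(1+\sqrt{1-\tfrac{9}{2\log x}}\Big)$$ and $$\lambda-\log(-\log x)\ge-\log 2+\log\Big(1+\sqrt{1-\tfrac{8}{\log x}}\Big).$$
   Context: $\log$ denotes the natural logarithm. *)

From Stdlib Require Export Reals.

(* With t = e^lam one has -log x = t - log (1 + t) =: L, so the quantity to bound is
   log (t / L).  After squaring, the upper bound on t / L is equivalent to
   log (1 + t) <= t (t + 6) / (4 t + 6) and the lower bound to
   2 t / (t + 2) <= log (1 + t); both Padé-type estimates hold because the difference
   of the two sides vanishes at 0 and has a nonnegative derivative on [0, oo). *)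

From Coquelicot Require Import Coquelicot.
From Stdlib Require Import Reals Lra.
Open Scope R_scope.

Lemma le_of_derive_nonneg (f df : R -> R) (a b : R) : a <= b ->
  (forall s, a <= s <= b -> is_derive f s (df s)) ->
  (forall s, a <= s <= b -> 0 <= df s) -> f a <= f b.
Proof.
  intros Hab Hd Hpos.
  destruct (MVT_gen f a b df) as [c [Hc Hfc]];
    rewrite ?Rmin_left, ?Rmax_right in * by lra.
  - intros s Hs. apply Hd. lra.
  - intros s Hs. apply continuity_pt_filterlim, (ex_derive_continuous (V := R_NormedModule)).
    eexists. now apply Hd.
  - assert (0 <= df c) by now apply Hpos. nra.
Qed.

Lemma ln_1p_ge_pade (t : R) : 0 <= t -> 2 * t <= (t + 2) * ln (1 + t).
Proof.
  intros Ht.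
  rewrite (Rmult_comm (t + 2)), <- Rle_div_l by lra.
  set (g := fun s => ln (1 + s) - 2 * s / (s + 2)).
  assert (Hg : g 0 <= g t).
  { apply le_of_derive_nonneg with
      (df := fun s => s ^ 2 / ((1 + s) * (s + 2) ^ 2)); [lra | |].
    - intros s Hs. unfold g. auto_derive; [repeat split; lra | field; lra].
    - intros s Hs. apply Rdiv_le_0_compat; [nra | apply Rmult_lt_0_compat; nra]. }
  unfold g in Hg. rewrite Rplus_0_r, ln_1 in Hg. unfold Rdiv in *. lra.
Qed.

Lemma ln_1p_le_pade (t : R) : 0 <= t -> (4 * t + 6) * ln (1 + t) <= t * (t + 6).
Proof.
  intros Ht.
  rewrite (Rmult_comm (4 * t + 6)), Rle_div_r by lra.
  set (g := fun s => s * (s + 6) / (4 * s + 6) - ln (1 + s)).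
  assert (Hg : g 0 <= g t).
  { apply le_of_derive_nonneg with
      (df := fun s => s ^ 3 / ((1 + s) * (2 * s + 3) ^ 2)); [lra | |].
    - intros s Hs. unfold g. auto_derive; [repeat split; lra | field; lra].
    - intros s Hs. apply Rdiv_le_0_compat; [nra | apply Rmult_lt_0_compat; nra]. }
  unfold g in Hg. rewrite Rplus_0_r, ln_1 in Hg. unfold Rdiv in *. lra.
Qed.

Lemma neg_ln_exp_neg_mul_1p (t : R) : -1 < t ->
  - ln (exp (- t) * (t + 1)) = t - ln (1 + t).
Proof.
  intros Ht. rewrite ln_mult, ln_exp, (Rplus_comm t 1); [ring | apply exp_pos | lra].
Qed.

Lemma le_sqrt_of_sqr_le (y z : R) : y ^ 2 <= z -> y <= sqrt z.
Proof.
  intros Hyz. destruct (Rle_or_lt y 0) as [Hy | Hy].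
  - pose proof (sqrt_pos z). lra.
  - rewrite <- (sqrt_pow2 y) at 1 by lra. now apply sqrt_le_1_alt.
Qed.

Lemma sqrt_le_of_le_sqr (y z : R) : 0 <= y -> z <= y ^ 2 -> sqrt z <= y.
Proof.
  intros Hy Hzy. rewrite <- (sqrt_pow2 y) by exact Hy. now apply sqrt_le_1_alt.
Qed.

Lemma ratio_le_upper (t L : R) : 0 < L -> 3 * t ^ 2 <= L * (4 * t + 6) ->
  t / L <= 2 / 3 * (1 + sqrt (1 + 9 / (2 * L))).
Proof.
  intros HL Hpoly.
  assert (Hsq : (3 / 2 * (t / L) - 1) ^ 2 <= 1 + 9 / (2 * L)).
  { assert (Hdiff : 1 + 9 / (2 * L) - (3 / 2 * (t / L) - 1) ^ 2
                    = 3 / 4 * (L * (4 * t + 6) - 3 * t ^ 2) / L ^ 2) by (field; lra).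
    assert (0 <= 3 / 4 * (L * (4 * t + 6) - 3 * t ^ 2) / L ^ 2)
      by (apply Rdiv_le_0_compat; [lra | nra]).
    lra. }
  apply le_sqrt_of_sqr_le in Hsq. lra.
Qed.

Lemma ratio_ge_lower (t L : R) : 0 < L <= t -> 2 * L <= t * (t - L) ->
  (1 + sqrt (1 + 8 / L)) / 2 <= t / L.
Proof.
  intros [HL HLt] Hpoly.
  assert (Hu : 1 <= t / L) by (apply Rle_div_r; lra).
  assert (Hsq : 1 + 8 / L <= (2 * (t / L) - 1) ^ 2).
  { assert (Hdiff : (2 * (t / L) - 1) ^ 2 - (1 + 8 / L)
                    = 4 * (t * (t - L) - 2 * L) / L ^ 2) by (field; lra).
    assert (0 <= 4 * (t * (t - L) - 2 * L) / L ^ 2)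
      by (apply Rdiv_le_0_compat; [lra | nra]).
    lra. }
  apply sqrt_le_of_le_sqr in Hsq; lra.
Qed.

Theorem lemma1 (x lam : R) :
  0 < x < 1 ->
  x = exp (- exp lam) * (exp lam + 1) ->
  lam - ln (- ln x) <= ln (2 / 3) + ln (1 + sqrt (1 - 9 / (2 * ln x))) /\
  lam - ln (- ln x) >= - ln 2 + ln (1 + sqrt (1 - 8 / ln x)).
Proof.
  (* [0 < x < 1] is a consequence of the equation defining [x]. *)
  intros _ Hx.
  rewrite <- (ln_exp lam).
  assert (Ht : 0 < exp lam) by apply exp_pos.
  set (t := exp lam) in *.
  assert (Hlnx : ln x = - (t - ln (1 + t))).
  { rewrite Hx, <- neg_ln_exp_neg_mul_1p by lra. ring. }
  pose proof (ln_1p_ge_pade t ltac:(lra)) as Hlow.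
  pose proof (ln_1p_le_pade t ltac:(lra)) as Hup.
  set (L := t - ln (1 + t)) in *.
  assert (HL : 0 < L <= t) by (unfold L; nra).
  rewrite Hlnx, Ropp_involutive, <- ln_div by lra.
  replace (1 - 9 / (2 * - L)) with (1 + 9 / (2 * L)) by (field; lra).
  replace (1 - 8 / - L) with (1 + 8 / L) by (field; lra).
  pose proof (sqrt_pos (1 + 9 / (2 * L))).
  pose proof (sqrt_pos (1 + 8 / L)).
  split.
  - rewrite <- ln_mult by lra.
    apply ln_le; [apply Rdiv_lt_0_compat; lra |].
    apply ratio_le_upper; unfold L in *; nra.
  - replace (- ln 2 + ln (1 + sqrt (1 + 8 / L))) with (ln ((1 + sqrt (1 + 8 / L)) / 2))
      by (rewrite ln_div by lra; ring).
    apply Rle_ge, ln_le; [lra |].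
    apply ratio_ge_lower; unfold L in *; nra.
Qed.
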